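(* There exists no $\mathbb{N}$-rational sequence $x_1, x_2, \dots$ such that $x_{8n+1} > x_{9n+2}$ for all $n \geq 1$.
   Context: $\mathbb{N}=\{0,1,2,\dots\}$. A sequence $x_1, x_2, \dots \in \mathbb{N}$ is called $\mathbb{N}$-rational if there exist a dimension $d \geq 1$, a matrix $M \in \mathbb{N}^{d\times d}$ and vectors $v, w \in \mathbb{N}^d$ such that $x_n = v^{\top} M^n w$ for all $n \geq 1$. *)

From mathcomp Require Import all_boot all_algebra.
Set Implicit Arguments. Unset Strict Implicit. Unset Printing Implicit Defensive.
Import GRing.Theory.
Local Open Scope ring_scope.

Definition N_rational (x : nat -> nat) : Prop :=
  exists (d : nat) (M : 'M[nat]_d.+1) (v : 'rV[nat]_d.+1) (w : 'cV[nat]_d.+1),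
    forall n : nat, (0 < n)%N -> x n = (v *m (M ^+ n) *m w) ord0 ord0.

(* Let x n = v^T M^n w with M a nonnegative integer matrix of size N = d+1.
   The heart of the proof is an entrywise "pumping" inequality
       M^(N+m) <= M^(N+m+P)      for every m, with P = N!,
   proved combinatorially on the weighted digraph of M:
   - a vertex is "on a cycle" when some closed walk of length 1..N starts at
     it; every such vertex carries a closed walk of length P, since each of
     these lengths divides N! (so Dc <= Dc M^P, Dc the diagonal indicator of
     cyclic vertices);
   - the matrix Dn M, Dn the indicator of the acyclic vertices, has no short
     closed walks and is therefore nilpotent: (Dn M)^N = 0 (pigeonhole);
   - peeling M = Dc M + Dn M off N times writes M^(N+m) and M^(N+m+P) as
     S + (Dn M)^N M^m and S' + (Dn M)^N M^(m+P) with S <= S'.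
   Iterating gives x a <= x (a + tP) for a >= N and all t; taking
   n + 1 = (N+2) P makes 9n+2 = (8n+1) + (N+2)P with n > N, which
   contradicts x_(9n+2) < x_(8n+1). *)
From mathcomp Require Import all_boot all_algebra zify.
Set Implicit Arguments. Unset Strict Implicit. Unset Printing Implicit Defensive.
Import GRing.Theory.
Local Open Scope ring_scope.

Definition mxle m p (A B : 'M[nat]_(m, p)) := forall i j, (A i j <= B i j)%N.

Lemma mxle_refl m p (A : 'M[nat]_(m, p)) : mxle A A.
Proof. by move=> i j. Qed.

Lemma mxle_add m p (A A' B B' : 'M[nat]_(m, p)) :
  mxle A A' -> mxle B B' -> mxle (A + B) (A' + B').
Proof. by move=> leA leB i j; rewrite !mxE leq_add. Qed.

Lemma mxle_mul m p r (A A' : 'M[nat]_(m, p)) (B B' : 'M[nat]_(p, r)) :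
  mxle A A' -> mxle B B' -> mxle (A *m B) (A' *m B').
Proof. by move=> leA leB i j; rewrite !mxE; apply: leq_sum => k _; rewrite leq_mul. Qed.

Lemma mxle_mulr n (A A' B B' : 'M[nat]_n.+1) :
  mxle A A' -> mxle B B' -> mxle (A * B) (A' * B').
Proof. by rewrite -!mulmxE; apply: mxle_mul. Qed.

Lemma mxle_pow n (A B : 'M[nat]_n.+1) c : mxle A B -> mxle (A ^+ c) (B ^+ c).
Proof.
move=> leAB; elim: c => [|c IH]; first by rewrite !expr0; apply: mxle_refl.
by rewrite !exprS; apply: mxle_mulr.
Qed.

Section Walks.
Variable n : nat.

Lemma mul_entry_gt0 (A B : 'M[nat]_n.+1) i l j :
  (0 < A i l)%N -> (0 < B l j)%N -> (0 < (A * B)%R i j)%N.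
Proof.
move=> Ail Blj; rewrite -mulmxE mxE (bigD1 l) //=.
by rewrite (leq_trans _ (leq_addr _ _)) // muln_gt0 Ail Blj.
Qed.

Lemma mul_entry_gt0_inv (A B : 'M[nat]_n.+1) i j :
  (0 < (A * B)%R i j)%N -> exists l, (0 < A i l)%N /\ (0 < B l j)%N.
Proof.
rewrite -mulmxE mxE lt0n sum_nat_eq0 negb_forall => /existsP[l].
by rewrite muln_eq0 negb_or -!lt0n => /andP[Ail Blj]; exists l.
Qed.

Lemma walk_of_pow_gt0 (A : 'M[nat]_n.+1) q i j : (0 < (A ^+ q) i j)%N ->
  exists f : nat -> 'I_n.+1, [/\ f 0%N = i, f q = j &
    forall k, (k < q)%N -> (0 < A (f k) (f k.+1))%N].
Proof.
elim: q j => [|q IH] j.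
  by rewrite expr0 mxE; case: eqP => [<-|] // _; exists (fun=> i).
rewrite exprSr => /mul_entry_gt0_inv[l [Ail Alj]].
have [f [f0 fq fstep]] := IH l Ail.
exists (fun k => if (k <= q)%N then f k else j); split; rewrite ?leqnn ?ltnn //.
move=> k; rewrite ltnS => le_kq; rewrite le_kq.
by case: (ltngtP k q) le_kq => [lt_kq _|lt_qk|-> _]; rewrite ?fq ?fstep.
Qed.

Lemma pow_gt0_of_walk (A : 'M[nat]_n.+1) q (f : nat -> 'I_n.+1) :
  (forall k, (k < q)%N -> (0 < A (f k) (f k.+1))%N) ->
  forall a c, (a + c <= q)%N -> (0 < (A ^+ c) (f a) (f (a + c)%N))%N.
Proof.
move=> fstep a; elim=> [|c IH] le_q; first by rewrite expr0 mxE addn0 eqxx.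
rewrite exprSr (mul_entry_gt0 (l := f (a + c)%N)) ?IH ?(leq_trans _ le_q) ?addnS //.
by apply: fstep; rewrite -addnS.
Qed.

(* Pigeonhole: a walk of length n+1 in a digraph on n+1 vertices revisits a
   vertex, so a matrix without closed walks of length 1..n+1 is nilpotent. *)
Lemma nilpotent_of_no_short_cycle (A : 'M[nat]_n.+1) :
  (forall l c, (0 < c <= n.+1)%N -> (A ^+ c) l l = 0%N) -> A ^+ n.+1 = 0.
Proof.
move=> no_cycle; apply/matrixP => i j; rewrite [RHS]mxE.
have [//|/walk_of_pow_gt0[f [_ _ fstep]]] := posnP ((A ^+ n.+1) i j).
pose g (k : 'I_n.+2) := f k.
suff g_inj : injective g by have := leq_card g g_inj; rewrite !card_ord ltnn.
have cycle_free (a b : 'I_n.+2) : (a < b)%N -> g a <> g b.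
  move=> lt_ab gab; have := pow_gt0_of_walk fstep (a := a) (c := b - a).
  rewrite (subnKC (ltnW lt_ab)) -/(g a) -/(g b) gab no_cycle; last first.
    by rewrite subn_gt0 lt_ab (leq_trans (leq_subr _ _)) // -ltnS.
  by move/(_ (ltn_ord b)).
move=> a b gab; apply: val_inj.
by case: (ltngtP a b) => // [/cycle_free|/cycle_free/(_ (esym gab))].
Qed.

End Walks.

Section Pumping.
Variables (n : nat) (M : 'M[nat]_n.+1).

Definition on_cycle (l : 'I_n.+1) : bool :=
  [exists c : 'I_n.+1, (0 < (M ^+ c.+1) l l)%N].

Definition period : nat := (n.+1)`!.

Lemma pow_diag_gt0_mul l c k :
  (0 < (M ^+ c) l l)%N -> (0 < (M ^+ (c * k)) l l)%N.
Proof.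
move=> Mc; elim: k => [|k IH]; first by rewrite muln0 expr0 mxE eqxx.
by rewrite mulnS exprD (mul_entry_gt0 Mc IH).
Qed.

Lemma on_cycle_period l : on_cycle l -> (0 < (M ^+ period) l l)%N.
Proof.
case/existsP=> c Mc.
have /dvdnP[k ->] : (c.+1 %| period)%N by apply: dvdn_fact; exact: ltn_ord.
by rewrite mulnC pow_diag_gt0_mul.
Qed.

Definition indicator (b : pred 'I_n.+1) : 'M[nat]_n.+1 := diag_mx (\row_i (b i : nat)).

Lemma indicator_mulE b (A : 'M[nat]_n.+1) i j :
  (indicator b * A) i j = (b i * A i j)%N.
Proof. by rewrite -mulmxE mul_diag_mx !mxE. Qed.

Lemma indicator_partition (b : pred 'I_n.+1) :
  indicator b + indicator (fun i => ~~ b i) = 1.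
Proof. by apply/matrixP => i j; rewrite !mxE; case: eqP; case: (b i). Qed.

Let Dc := indicator on_cycle.
Let Dn := indicator (fun l => ~~ on_cycle l).

Lemma cyclic_part_pumps : mxle Dc (Dc * M ^+ period).
Proof.
move=> i j; rewrite indicator_mulE !mxE; case: eqP => [<-|] //=.
by case Ci: (on_cycle i); rewrite //= mul1n on_cycle_period.
Qed.

(* Only acyclic vertices start a walk of Dn M, so it has no short closed walks. *)
Lemma acyclic_part_nilpotent : (Dn * M) ^+ n.+1 = 0.
Proof.
apply: nilpotent_of_no_short_cycle => l c /andP[c_gt0 c_le]; apply/eqP.
rewrite -leqn0 leqNgt; apply/negP => DnMc.
have le_DnM_M : mxle (Dn * M) M.
  by move=> i j; rewrite indicator_mulE; case: (on_cycle i); rewrite ?mul0n ?mul1n.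
have cyc_l : on_cycle l.
  have lt_c : (c.-1 < n.+1)%N by rewrite prednK.
  apply/existsP; exists (Ordinal lt_c).
  by rewrite /= prednK // (leq_trans DnMc) ?mxle_pow.
move: DnMc; rewrite -(prednK c_gt0) exprS => /mul_entry_gt0_inv[k [DnMlk _]].
by move: DnMlk; rewrite indicator_mulE cyc_l.
Qed.

(* Peeling off k factors M = Dc M + Dn M: the terms that pass through a cyclic
   vertex are dominated after appending P steps, given Dc <= Dc M^P. *)
Lemma peel_powers (P : nat) (C D : 'M[nat]_n.+1) :
  C + D = 1 -> mxle C (C * M ^+ P) ->
  forall k m, exists S S', [/\ mxle S S',
     M ^+ (k + m) = S + (D * M) ^+ k * M ^+ m &
     M ^+ (k + m + P) = S' + (D * M) ^+ k * M ^+ (m + P)].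
Proof.
move=> CD CP; elim=> [|k IH] m.
  by exists 0, 0; rewrite !add0r expr0 !mul1r; split; first exact: mxle_refl.
have [S [S' [leS E1 E2]]] := IH m.+1.
have peel q : (D * M) ^+ k * M ^+ q.+1
           = (D * M) ^+ k * C * M ^+ q.+1 + (D * M) ^+ k.+1 * M ^+ q.
  by rewrite [(D * M) ^+ k.+1]exprSr exprS !mulrA -!mulrDl -mulrDr CD mulr1.
exists (S + (D * M) ^+ k * C * M ^+ m.+1),
       (S' + (D * M) ^+ k * C * M ^+ (m.+1 + P)); split.
- apply: mxle_add => //; rewrite addnC exprD mulrA.
  apply: mxle_mulr (mxle_refl _); rewrite -mulrA.
  exact: mxle_mulr (mxle_refl _) CP.
- by rewrite addSnnS E1 peel addrA.
- by rewrite addSnnS E2 addSn peel addrA.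
Qed.

Lemma pumping t m : mxle (M ^+ (n.+1 + m)) (M ^+ (n.+1 + m + t * period)).
Proof.
have step q : mxle (M ^+ (n.+1 + q)) (M ^+ (n.+1 + q + period)).
  have [S [S' [leS -> ->]]] :=
    peel_powers (indicator_partition on_cycle) cyclic_part_pumps n.+1 q.
  by rewrite acyclic_part_nilpotent !mul0r !addr0.
elim: t => [|t IH]; first by rewrite mul0n addn0; apply: mxle_refl.
move=> i j; apply: leq_trans (IH i j) _.
have -> : (n.+1 + m + t.+1 * period = n.+1 + (m + t * period) + period)%N.
  by rewrite mulSn; lia.
by rewrite -[(n.+1 + m + _)%N]addnA step.
Qed.

End Pumping.

Lemma N_rational_pumping x : N_rational x ->
  exists N P, (0 < P)%N /\ forall a t, (N <= a)%N -> (x a <= x (a + t * P))%N.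
Proof.
move=> [d [M [v [w xE]]]]; exists d.+1, (period d); split; first exact: fact_gt0.
move=> a t le_Na; have a_gt0 : (0 < a)%N by apply: leq_trans le_Na.
rewrite !xE ?(leq_trans a_gt0 (leq_addr _ _)) // -(subnKC le_Na).
exact: mxle_mul (mxle_mul (mxle_refl v) (pumping M t _)) (mxle_refl w) ord0 ord0.
Qed.

Theorem mainTheorem1 :
  ~ exists x : nat -> nat,
      N_rational x /\ (forall n : nat, (0 < n)%N -> (x (9 * n + 2) < x (8 * n + 1))%N).
Proof.
move=> [x [/N_rational_pumping[N [P [P_gt0 pump]]] decreasing]].
pose n := (N.+2 * P).-1.
have nP : n.+1 = (N.+2 * P)%N by rewrite prednK // muln_gt0.
have lt_Nn : (N < n)%N by rewrite -ltnS nP leq_pmulr.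
have := decreasing n (leq_ltn_trans (leq0n N) lt_Nn).
have -> : (9 * n + 2 = 8 * n + 1 + N.+2 * P)%N by rewrite -nP; lia.
by rewrite ltnNge pump //; lia.
Qed.
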